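(* Let $G$ be a group, $\varphi\colon A\to B$ an isomorphism between subgroups of $G$, $G^*=\langle G,t\mid t^{-1}at=\varphi(a),\ a\in A\rangle$ the HNN extension, and $H=H(G,\varphi)$. Then $H$ is the largest subgroup of $G$ with $\varphi(H)=H$, and, as subgroups of $G^*$, $H=\bigcap_{i\in\mathbb{Z}}t^{-i}Gt^{i}$. Moreover $H=\{g\in G:\ \varphi^j(g)\text{ is defined for all } j\in\mathbb{Z}\}$. If $A$ is finite, then there exists an integer $r\ge 0$ such that for every $s\ge r$ we have $H=\{g\in G:\ \varphi^j(g)\text{ is defined for } j=0,\dots,s\}$.
   Context: The core $H(G,\varphi)$ is $\bigcap_k H_k$ where $H_0=A\cap B$ and $H_{k+1}=\varphi^{-1}(H_k)\cap H_k\cap\varphi(H_k)$ (with $\varphi^{-1}(H_k)=\{a\in A:\varphi(a)\in H_k\}$). For $g\in G$ and $n\in\mathbb{N}$, ''$\varphi^n(g)$ is defined'' means $g$ lies in the domain of the $n$-fold composite of $\varphi$ regarded as a partially defined map $G\to G$, and ''$\varphi^{-n}(g)$ is defined'' means $g$ lies in the domain of the $n$-fold composite of $\varphi^{-1}\colon B\to A$ regarded as a partial map; $\varphi^0(g)$ is always defined. $G$ is regarded as a subgroup of $G^*$. *)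

From HB Require Import structures.
From mathcomp Require Import all_boot.
From mathcomp Require Import monoid ssrint.

Set Implicit Arguments.
Unset Strict Implicit.
Unset Printing Implicit Defensive.

(* The partial isomorphism phi : A -> B is a total function [phi : G -> G]
   of which only the values on A matter. *)

Local Open Scope group_scope.

Section Defs.
Variable G : groupType.

Definition subset_of (S T : G -> Prop) := forall x, S x -> T x.
Definition set_eq (S T : G -> Prop) := forall x, S x <-> T x.

Definition is_subgroup (S : G -> Prop) :=
  S 1 /\ (forall x y, S x -> S y -> S (x * y)) /\ (forall x, S x -> S x^-1).

Definition is_hom (K L : groupType) (f : K -> L) :=
  forall x y, f (x * y) = f x * f y.

Definition partial_iso (A B : G -> Prop) (phi : G -> G) :=
  [/\ is_subgroup A /\ is_subgroup B,
      (forall a, A a -> B (phi a)),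
      (forall a a', A a -> A a' -> phi a = phi a' -> a = a'),
      (forall b, B b -> exists2 a, A a & phi a = b) &
      (forall a a', A a -> A a' -> phi (a * a') = phi a * phi a')].

Definition image_of (phi : G -> G) (S : G -> Prop) : G -> Prop :=
  fun y => exists2 s, S s & y = phi s.

Definition preimage_of (A : G -> Prop) (phi : G -> G) (S : G -> Prop) : G -> Prop :=
  fun a => A a /\ S (phi a).

Fixpoint core_k (A B : G -> Prop) (phi : G -> G) (k : nat) : G -> Prop :=
  match k with
  | 0 => fun g => A g /\ B g
  | k'.+1 => fun g =>
      [/\ preimage_of A phi (core_k A B phi k') g,
          core_k A B phi k' g &
          image_of phi (core_k A B phi k') g]
  end.

Definition core (A B : G -> Prop) (phi : G -> G) : G -> Prop :=
  fun g => forall k, core_k A B phi k g.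

Fixpoint fwd_defined (A : G -> Prop) (phi : G -> G) (n : nat) (g : G) : Prop :=
  match n with
  | 0 => True
  | n'.+1 => A g /\ fwd_defined A phi n' (phi g)
  end.

Fixpoint bwd_defined (A B : G -> Prop) (phi : G -> G) (n : nat) (g : G) : Prop :=
  match n with
  | 0 => True
  | n'.+1 => B g /\ exists2 a, A a /\ phi a = g & bwd_defined A B phi n' a
  end.

Definition iter_defined (A B : G -> Prop) (phi : G -> G) (j : int) (g : G) : Prop :=
  match j with
  | Posz n => fwd_defined A phi n g
  | Negz n => bwd_defined A B phi n.+1 g
  end.

Definition finite_pred (S : G -> Prop) := exists s : seq G, forall x, S x -> x \in s.

End Defs.

Definition zpow (K : groupType) (t : K) (i : int) : K :=
  match i with
  | Posz n => t ^+ n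
  | Negz n => (t ^+ n.+1)^-1
  end.

(* (Gs, iota, t) is the HNN extension  < G, t | t^-1 a t = phi a, a in A >,
   characterised by its universal property. *)
Definition is_HNN_extension (G : groupType) (A : G -> Prop) (phi : G -> G)
    (Gs : groupType) (iota : G -> Gs) (t : Gs) : Prop :=
  [/\ is_hom iota,
      (forall a, A a -> t^-1 * iota a * t = iota (phi a)) &
      (forall (L : groupType) (f : G -> L) (u : L),
          is_hom f -> (forall a, A a -> u^-1 * f a * u = f (phi a)) ->
          exists F : Gs -> L,
            [/\ is_hom F, (forall g, F (iota g) = f g), F t = u &
                forall F' : Gs -> L, is_hom F' -> (forall g, F' (iota g) = f g) ->
                  F' t = u -> forall x, F' x = F x])].

From HB Require Import structures.
From mathcomp Require Import all_boot monoid ssralg ssrint zify.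
From mathcomp Require Import boolp classical_sets.

Set Implicit Arguments.
Unset Strict Implicit.
Unset Printing Implicit Defensive.

Local Open Scope group_scope.

(* [H] is the largest subset of [A] mapped onto itself by [phi]: membership in
   every [H_k] only asks for [k] steps of the orbit to exist in both
   directions.  This gives the maximality and the description by iterates; if
   [A] is finite, a forward orbit that stays in [A] longer than [|A|] steps
   closes up into a cycle (pigeonhole and injectivity of [phi]), and a cycle is
   such an invariant subset.  In [G*], conjugation by [t] realises [phi] on [A];
   conversely, by Britton's lemma for [t^-1 g t] (proved by letting [G*] act on
   reduced words), the elements of [G] lying in every [t^-i G t^i] form an
   invariant subset of [A]. *)

Section SubgroupFacts.
Variables (G : groupType) (S : G -> Prop).

Definition coset_rep (g : G) : G := xget 1 (fun c => (S g -> c = 1) /\ S (g * c^-1)).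

Hypothesis S_subgroup : is_subgroup S.

Lemma subgroup1 : S 1. Proof. by case: S_subgroup. Qed.
Lemma subgroupM x y : S x -> S y -> S (x * y).
Proof. by case: S_subgroup => _ [+ _]; apply. Qed.
Lemma subgroupV x : S x -> S x^-1. Proof. by case: S_subgroup => _ [_]; apply. Qed.

Lemma subgroupMl a g : S a -> S (a * g) <-> S g.
Proof.
move=> Sa; split=> [Sag|]; last exact: subgroupM.
by rewrite -(mulKg a g); apply: subgroupM => //; apply: subgroupV.
Qed.

Lemma coset_repP g : (S g -> coset_rep g = 1) /\ S (g * (coset_rep g)^-1).
Proof.
apply: (xgetPex 1 (P := fun c => (S g -> c = 1) /\ S (g * c^-1))).
have [Sg|NSg] := pselect (S g).
  by exists 1; rewrite invg1 mulg1.
by exists g; split=> //; rewrite mulgV; apply: subgroup1.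
Qed.

Lemma coset_rep_eq1 g : coset_rep g = 1 <-> S g.
Proof.
split=> [rg1|]; last by case: (coset_repP g) => + _; apply.
by have [_] := coset_repP g; rewrite rg1 invg1 mulg1.
Qed.

Lemma coset_repMl a g : S a -> coset_rep (a * g) = coset_rep g.
Proof.
move=> Sa; rewrite /coset_rep; congr xget; apply: funext => c; apply: propext.
by rewrite -mulgA (subgroupMl g Sa) (subgroupMl (g * c^-1) Sa).
Qed.

Lemma coset_rep_idem g : coset_rep (coset_rep g) = coset_rep g.
Proof.
have [_ Sgc] := coset_repP g.
have E : coset_rep g = (g * (coset_rep g)^-1)^-1 * g by rewrite invgM invgK mulgVK.
by rewrite {1}E coset_repMl //; apply: subgroupV.
Qed.

End SubgroupFacts.

Section HomFacts.
Variables (K L : groupType) (f : K -> L).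
Hypothesis f_hom : is_hom f.

Lemma hom1 : f 1 = 1.
Proof. by apply: (@mulgI _ (f 1)); rewrite -f_hom !mulg1. Qed.

Lemma homV x : f x^-1 = (f x)^-1.
Proof. by apply: (@mulIg _ (f x)); rewrite -f_hom !mulVg hom1. Qed.

End HomFacts.

Lemma zpowS (K : groupType) (t : K) (i : int) : zpow t (i + 1%R)%R = t * zpow t i.
Proof.
case: i => [n|[|n]] /=.
- by rewrite addn1 expgS.
- by rewrite expg1 mulgV.
- by rewrite subn1 [t ^+ n.+2]expgSr invgM mulVKg.
Qed.

Lemma conj_zpowS (K : groupType) (t y : K) (i : int) :
  (zpow t (i + 1%R)%R)^-1 * y * zpow t (i + 1%R)%R = (zpow t i)^-1 * (t^-1 * y * t) * zpow t i.
Proof. by rewrite zpowS invgM !mulgA. Qed.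

Record sym (X : Type) := Sym {
  sym_fun : X -> X;
  sym_inv : X -> X;
  sym_funK : cancel sym_fun sym_inv;
  sym_invK : cancel sym_inv sym_fun }.

Lemma sym_eq (X : Type) (p q : sym X) : sym_fun p = sym_fun q -> p = q.
Proof.
case: p q => f g fK gK [f' g' fK' gK'] /= ef; subst f'.
have eg : g = g' by apply: funext => y; rewrite -{1}(gK' y) fK.
by subst g'; rewrite (Prop_irrelevance fK fK') (Prop_irrelevance gK gK').
Qed.

HB.instance Definition _ (X : Type) := gen_eqMixin (sym X).
HB.instance Definition _ (X : Type) := gen_choiceMixin (sym X).

Section SymGroup.
Variable X : Type.

Definition sym_one : sym X := @Sym X id id (fun _ => erefl) (fun _ => erefl).
Definition sym_rev (p : sym X) : sym X := Sym (sym_invK p) (sym_funK p).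

Definition sym_comp (p q : sym X) : sym X.
Proof.
refine (@Sym X (sym_fun p \o sym_fun q) (sym_inv q \o sym_inv p) _ _) => x /=.
  by rewrite !sym_funK.
by rewrite !sym_invK.
Defined.

Lemma sym_compA : associative sym_comp. Proof. by move=> p q r; apply: sym_eq. Qed.
Lemma sym_comp1p : left_id sym_one sym_comp. Proof. by move=> p; apply: sym_eq. Qed.
Lemma sym_compp1 : right_id sym_one sym_comp. Proof. by move=> p; apply: sym_eq. Qed.

Lemma sym_compVp : left_inverse sym_one sym_rev sym_comp.
Proof. by move=> p; apply: sym_eq; apply: funext => x /=; rewrite sym_funK. Qed.

Lemma sym_comppV : right_inverse sym_one sym_rev sym_comp.
Proof. by move=> p; apply: sym_eq; apply: funext => x /=; rewrite sym_invK. Qed.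

End SymGroup.

HB.instance Definition _ (X : Type) :=
  isGroup.Build (sym X) (@sym_compA X) (@sym_comp1p X) (@sym_compp1 X)
    (@sym_compVp X) (@sym_comppV X).

Section PartialIso.
Variables (G : groupType) (A B : G -> Prop) (phi : G -> G).

Definition phi_inv (b : G) : G := xget 1 (fun a => A a /\ phi a = b).

Hypothesis phi_iso : partial_iso A B phi.

Lemma A_subgroup : is_subgroup A. Proof. by case: phi_iso => [[]]. Qed.
Lemma B_subgroup : is_subgroup B. Proof. by case: phi_iso => [[]]. Qed.

Lemma phi_in a : A a -> B (phi a). Proof. by case: phi_iso => _ + _ _ _; apply. Qed.

Lemma phi_inj a a' : A a -> A a' -> phi a = phi a' -> a = a'.
Proof. by case: phi_iso => _ _ + _ _; apply. Qed.

Lemma phiM a a' : A a -> A a' -> phi (a * a') = phi a * phi a'.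
Proof. by case: phi_iso => _ _ _ _; apply. Qed.

Lemma phi1 : phi 1 = 1.
Proof.
have A1 := subgroup1 A_subgroup.
by apply: (@mulgI _ (phi 1)); rewrite -phiM // !mulg1.
Qed.

Lemma phiV a : A a -> phi a^-1 = (phi a)^-1.
Proof.
move=> Aa; have AVa := subgroupV A_subgroup Aa.
by apply: (@mulIg _ (phi a)); rewrite -phiM // !mulVg phi1.
Qed.

Lemma phi_invP b : B b -> A (phi_inv b) /\ phi (phi_inv b) = b.
Proof.
move=> Bb; apply: (xgetPex 1 (P := fun a => A a /\ phi a = b)).
by case: phi_iso => _ _ _ /(_ b Bb) [a Aa <-] _; exists a.
Qed.

Lemma phiK a : A a -> phi_inv (phi a) = a.
Proof. by move=> Aa; have [Aa' /phi_inj] := phi_invP (phi_in Aa); apply. Qed.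

End PartialIso.

Section ReducedWords.
Variables (G : groupType) (A B : G -> Prop) (phi : G -> G).
Hypothesis phi_iso : partial_iso A B phi.

Definition letter_dom (e : bool) := if e then B else A.
Definition letter_map (e : bool) := if e then phi_inv A phi else phi.

Lemma letter_dom_subgroup e : is_subgroup (letter_dom e).
Proof. by case: e; [apply: B_subgroup phi_iso | apply: A_subgroup phi_iso]. Qed.

Lemma letter_map_in e s : letter_dom e s -> letter_dom (~~ e) (letter_map e s).
Proof. by case: e => /= [/(phi_invP phi_iso) [] | /(phi_in phi_iso)]. Qed.

Lemma letter_mapK e s : letter_dom e s -> letter_map (~~ e) (letter_map e s) = s.
Proof. by case: e => /= [/(phi_invP phi_iso) [] | /(phiK phi_iso)]. Qed.

(* [(g, [:: (e1, c1); (e2, c2); ...])] encodes the normal form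
   [g t^(s1) c1 t^(s2) c2 ...] of the HNN extension, where [s_i = 1] if [e_i]
   and [s_i = -1] otherwise, and [c_i] is the chosen representative of its right
   coset of [letter_dom e_i]. *)
Definition word := (G * seq (bool * G))%type.

Fixpoint reduced (w : seq (bool * G)) : Prop :=
  if w is (e, c) :: w' then
    [/\ coset_rep (letter_dom e) c = c, reduced w' &
        c = 1 -> forall e' c' w'', w' = (e', c') :: w'' -> e' = e]
  else True.

(* Left multiplication by [t] (if [e]) or by [t^-1] (otherwise), using
   [t b = phi^-1(b) t] for [b] in [B] and [t^-1 a = phi(a) t^-1] for [a] in [A]. *)
Definition tmul (e : bool) (x : word) : word :=
  let c := coset_rep (letter_dom e) x.1 in
  let h := letter_map e (x.1 * c^-1) in
  if x.2 is (e', c') :: w then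
    if (c == 1) && (e' == ~~ e) then (h * c', w) else (h, (e, c) :: x.2)
  else (h, (e, c) :: x.2).

Definition gmul (g : G) (x : word) : word := (g * x.1, x.2).

Lemma tmul_reduced e x : reduced x.2 -> reduced (tmul e x).2.
Proof.
have rep_idem := coset_rep_idem (letter_dom_subgroup e).
case: x => g [|[e' c'] w] //= red_w; rewrite /tmul /=.
case: ifP => [_|not_pinch]; first by case: red_w.
split=> // c1 e2 c2 w2 [<- _ _]; move: not_pinch; rewrite c1 eqxx /=.
by case: (e') (e) => [] [].
Qed.

Lemma tmulK e x : reduced x.2 -> tmul (~~ e) (tmul e x) = x.
Proof.
case: x => g w /= red_w.
have [_ Db] := coset_repP (letter_dom_subgroup e) g.
have Dh := letter_map_in Db.
have rep_h :
    coset_rep (letter_dom (~~ e)) (letter_map e (g * (coset_rep (letter_dom e) g)^-1)) = 1.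
  exact/(coset_rep_eq1 (letter_dom_subgroup _)).
have push w0 : tmul (~~ e)
    (letter_map e (g * (coset_rep (letter_dom e) g)^-1), (e, coset_rep (letter_dom e) g) :: w0)
    = (g, w0).
  by rewrite /tmul /= rep_h eqxx negbK eqxx /= invg1 mulg1 letter_mapK // mulgVK.
case: w red_w => [|[e' c'] w'] red_w; rewrite [tmul e _]/tmul /=; first exact: push.
case: ifP => [/andP[/eqP c1 /eqP e'E] | _]; last exact: push.
subst e'; case: red_w => rep_c' red_w' no_pinch.
rewrite /tmul /= coset_repMl ?rep_c' //; last exact: letter_dom_subgroup.
rewrite mulgK letter_mapK // c1 invg1 mulg1.
case: w' red_w' no_pinch => [|[e2 c2] w2] // _ no_pinch.
case: ifP => // /andP[/eqP c'1 /eqP e2E].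
by have := no_pinch c'1 _ _ _ erefl; rewrite e2E negbK; case: (e).
Qed.

Lemma tmul_conj a x : A a -> reduced x.2 ->
  tmul false (gmul a (tmul true x)) = gmul (phi a) x.
Proof.
move=> Aa; case: x => g w /= red_w.
have [_ Bb] := coset_repP (B_subgroup phi_iso) g.
have [Ab phi_b] := phi_invP phi_iso Bb.
have A_ab : A (a * phi_inv A phi (g / coset_rep B g)).
  exact: (subgroupM (A_subgroup phi_iso)).
have phi_ab : phi (a * phi_inv A phi (g / coset_rep B g)) = phi a * (g / coset_rep B g).
  by rewrite (phiM phi_iso) ?phi_b.
have push w0 :
    tmul false (gmul a (phi_inv A phi (g / coset_rep B g), (true, coset_rep B g) :: w0))
    = (phi a * g, w0).
  rewrite /tmul /gmul /= (coset_rep_eq1 (A_subgroup phi_iso) _).2 //.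
  by rewrite eqxx /= invg1 mulg1 phi_ab mulgA mulgVK.
rewrite /gmul /=; case: w red_w => [|[e' c'] w'] red_w; rewrite [tmul true _]/tmul /=.
  exact: push.
case: ifP => [/andP[/eqP c1 /eqP e'E] | _]; last exact: push.
subst e'; case: red_w => rep_c' red_w' no_pinch.
rewrite /tmul /= mulgA coset_repMl ?rep_c' //; last exact: A_subgroup phi_iso.
rewrite mulgK phi_ab c1 invg1 !mulg1.
case: w' red_w' no_pinch => [|[e2 c2] w2] // _ no_pinch.
case: ifP => // /andP[/eqP c'1 /eqP e2E].
by have := no_pinch c'1 _ _ _ erefl; rewrite e2E.
Qed.

(* Britton's lemma for [t^-1 g' t], read off the empty word. *)
Lemma tconj_nil_dom g g' :
  tmul false (gmul g' (tmul true (1, [::]))) = gmul g (1, [::]) -> A g'.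
Proof.
have [_ B1] := coset_repP (B_subgroup phi_iso) 1.
have A_inv := (phi_invP phi_iso B1).1.
rewrite /tmul /gmul /=; case: eqP => [/(coset_rep_eq1 (A_subgroup phi_iso)) Ah _ | //].
have AV := subgroupV (A_subgroup phi_iso) A_inv.
by have := subgroupM (A_subgroup phi_iso) Ah AV; rewrite mulgK.
Qed.

Definition rword := {x : word | reduced x.2}.

Lemma rword_eq (x y : rword) : sval x = sval y -> x = y.
Proof. by case: x y => x rx [y ry] /= exy; subst y; rewrite (Prop_irrelevance rx ry). Qed.

Definition rtmul e (x : rword) : rword := exist _ (tmul e (sval x)) (tmul_reduced e (svalP x)).
Definition rgmul g (x : rword) : rword := exist _ (gmul g (sval x)) (svalP x).

Lemma rtmulK e : cancel (rtmul e) (rtmul (~~ e)).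
Proof. by move=> x; apply: rword_eq; apply: (tmulK e (svalP x)). Qed.

Lemma rgmulK g : cancel (rgmul g) (rgmul g^-1).
Proof. by move=> x; apply: rword_eq; rewrite /= /gmul /= mulKg; case: (sval x). Qed.

Lemma rgmulVK g : cancel (rgmul g^-1) (rgmul g).
Proof. by move=> x; apply: rword_eq; rewrite /= /gmul /= mulVKg; case: (sval x). Qed.

Definition t_sym : sym rword := Sym (rtmulK true) (rtmulK false).
Definition g_sym (g : G) : sym rword := Sym (rgmulK g) (rgmulVK g).

Lemma g_sym_hom : is_hom g_sym.
Proof.
by move=> g h; apply: sym_eq; apply: funext => x; apply: rword_eq; rewrite /= /gmul mulgA.
Qed.

Lemma g_sym_conj a : A a -> t_sym^-1 * g_sym a * t_sym = g_sym (phi a).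
Proof.
move=> Aa; apply: sym_eq; apply: funext => x; apply: rword_eq.
exact: (tmul_conj Aa (svalP x)).
Qed.

Section HNNEmbedding.
Variables (Gs : groupType) (iota : G -> Gs) (t : Gs).
Hypothesis HNN : is_HNN_extension A phi iota t.

Lemma HNN_word_action :
  exists F : Gs -> sym rword, [/\ is_hom F, forall g, F (iota g) = g_sym g & F t = t_sym].
Proof.
case: HNN => _ _ /(_ _ g_sym t_sym g_sym_hom g_sym_conj) [F [F_hom F_iota F_t _]].
by exists F.
Qed.

Definition empty_rword : rword := exist _ (1, [::]) I.

Lemma iota_inj : injective iota.
Proof.
move=> g g' e_iota; have [F [_ F_iota _]] := HNN_word_action.
have := congr1 (fun p => sval (sym_fun p empty_rword)) (congr1 F e_iota).
by rewrite !F_iota /= /gmul /= !mulg1 => -[].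
Qed.

Lemma iota_conj_in g g' : iota g = t^-1 * iota g' * t -> A g' /\ g = phi g'.
Proof.
move=> e_iota; have [F [F_hom F_iota F_t]] := HNN_word_action.
have e_sym : g_sym g = t_sym^-1 * g_sym g' * t_sym.
  by rewrite -F_iota e_iota !F_hom (homV F_hom) F_iota F_t.
have Ag' : A g'.
  apply: (tconj_nil_dom (g := g)).
  by have := congr1 (fun p => sval (sym_fun p empty_rword)) e_sym.
split=> //; apply: iota_inj; rewrite e_iota.
by case: HNN => _ -> .
Qed.

End HNNEmbedding.

End ReducedWords.

Section Core.
Variables (G : groupType) (A B : G -> Prop) (phi : G -> G).
Hypothesis phi_iso : partial_iso A B phi.

Local Notation H := (core A B phi).

Lemma core_k_AB k g : core_k A B phi k g -> A g /\ B g.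
Proof. by elim: k g => [//|k IH] g /= [_ /IH]. Qed.

Lemma core_k_subgroup k : is_subgroup (core_k A B phi k).
Proof.
have [A1 [AM AV]] := A_subgroup phi_iso; have [B1 [BM BV]] := B_subgroup phi_iso.
elim: k => [|k [H1 [HM HV]]] /=.
  by split; [|split] => [|x y [? ?] [? ?]|x [? ?]]; split; auto.
have HA x : core_k A B phi k x -> A x by case/core_k_AB.
split; [|split].
- by split; [split; rewrite ?(phi1 phi_iso) | | exists 1; rewrite ?(phi1 phi_iso)].
- move=> x y [[Ax Hx] Hkx [x' Hx' ex]] [[Ay Hy] Hky [y' Hy' ey]]; split.
  + by split; [apply: AM | rewrite (phiM phi_iso) //; apply: HM].
  + exact: HM.
  + by exists (x' * y'); [apply: HM | rewrite ex ey (phiM phi_iso) //; apply: HA].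
- move=> x [[Ax Hx] Hkx [x' Hx' ex]]; split.
  + by split; [apply: AV | rewrite (phiV phi_iso) //; apply: HV].
  + exact: HV.
  + by exists x'^-1; [apply: HV | rewrite ex (phiV phi_iso) //; apply: HA].
Qed.

Lemma core_subgroup : is_subgroup H.
Proof.
split; first by move=> k; case: (core_k_subgroup k).
by split=> [x y Hx Hy k | x Hx k]; have [_ [HM HV]] := core_k_subgroup k; auto.
Qed.

Lemma core_A g : H g -> A g. Proof. by move/(_ 0%N) => []. Qed.
Lemma core_B g : H g -> B g. Proof. by move/(_ 0%N) => []. Qed.

Lemma core_phi g : H g -> H (phi g).
Proof. by move=> Hg k; case: (Hg k.+1) => [[]]. Qed.

(* The preimages of [g] in the successive [core_k] coincide by injectivity of [phi]. *)
Lemma core_preimage g : H g -> exists2 a, H a & phi a = g.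
Proof.
move=> Hg; case: (Hg 1%N) => _ _ [a [Aa _] ea].
exists a => // k; case: (Hg k.+1) => _ _ [a' Ha' ea'].
by rewrite (phi_inj phi_iso Aa (core_k_AB Ha').1) // -ea -ea'.
Qed.

Lemma image_core : set_eq (image_of phi H) H.
Proof.
move=> g; split=> [[a Ha ->] | /core_preimage [a Ha <-]]; first exact: core_phi.
by exists a.
Qed.

Lemma invariant_sub_core (K : G -> Prop) :
  subset_of K A -> set_eq (image_of phi K) K -> subset_of K H.
Proof.
move=> KA KK g Kg k; elim: k g Kg => [|k IH] g Kg /=.
  split; first exact: KA.
  by have [a Ka ->] := (KK g).2 Kg; apply: (phi_in phi_iso); apply: KA.
split; [split | |].
- exact: KA.
- by apply: IH; apply: (KK _).1; exists g.
- exact: IH.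
- by have [a Ka ->] := (KK g).2 Kg; exists a => //; apply: IH.
Qed.

Lemma fwd_defined_closed (P : G -> Prop) :
  (forall x, P x -> A x /\ P (phi x)) -> forall n x, P x -> fwd_defined A phi n x.
Proof. by move=> PP; elim=> [//|n IH] x /PP [Ax /IH]. Qed.

Lemma bwd_defined_closed (P : G -> Prop) :
  (forall x, P x -> B x /\ exists2 a, A a /\ phi a = x & P a) ->
  forall n x, P x -> bwd_defined A B phi n x.
Proof.
move=> PP; elim=> [//|n IH] x /PP [Bx [a a_pre Pa]] /=.
by split=> //; exists a => //; apply: IH.
Qed.

Lemma core_iter_defined g : H g <-> forall j : int, iter_defined A B phi j g.
Proof.
split=> [Hg [n|n]|defg].
- by apply: (fwd_defined_closed (P := H)) Hg => x Hx; split; [apply: core_A | apply: core_phi].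
- apply: (bwd_defined_closed (P := H)) Hg => x Hx; split; first exact: core_B.
  by have [a Ha ea] := core_preimage Hx; exists a => //; split=> //; apply: core_A.
pose D x := forall j : int, iter_defined A B phi j x.
have DA x : D x -> A x by move/(_ (Posz 1)) => [].
apply: (invariant_sub_core (K := D)) defg => // x; split.
  move=> [a Da ->] [n|n] /=.
    by case: (Da (Posz n.+1)).
  split; first by apply: (phi_in phi_iso); apply: DA.
  exists a; first by split=> //; apply: DA.
  by case: n => [//|n]; apply: (Da (Negz n)).
move=> Dx; have [_ [a [Aa ea] _]] := Dx (Negz 0).
exists a => //; case=> [[|n]|n] /=.
- by [].
- by split=> //; rewrite ea; apply: (Dx (Posz n)).
- have [_ [a' [Aa' ea'] ba']] := Dx (Negz n.+1).
  by rewrite (phi_inj phi_iso Aa Aa') // ea ea'.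
Qed.

Lemma fwd_definedE n x :
  fwd_defined A phi n x <-> forall k, (k < n)%N -> A (iter k phi x).
Proof.
elim: n x => [|n IH] x /=; first by split=> // _ [].
rewrite IH; split=> [[Ax Aiter] [|k] //= kn|Aiter].
  by rewrite -iterS iterSr; apply: Aiter.
by split=> [|k kn]; [apply: (Aiter 0%N) | rewrite -iterSr; apply: Aiter].
Qed.

Lemma periodic_in_core g d : (0 < d)%N -> (forall k, (k < d)%N -> A (iter k phi g)) ->
  iter d phi g = g -> H g.
Proof.
move=> d_gt0 Aiter gd.
pose K x := exists2 k, (k < d)%N & x = iter k phi g.
apply: (invariant_sub_core (K := K)); last by exists 0%N.
  by move=> x [k kd ->]; apply: Aiter.
move=> x; split=> [[y [k kd ->] ->] | [k kd ->]].
  rewrite -iterS; case: (ltnP k.+1 d) => [kd'|dk]; first by exists k.+1.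
  by exists 0%N => //; have -> : k.+1 = d by lia.
case: k kd => [|k] kd.
  exists (iter d.-1 phi g); first by exists d.-1; rewrite ?prednK ?ltn_predL.
  by rewrite -iterS prednK.
by exists (iter k phi g); [exists k => //; apply: ltnW | rewrite iterS].
Qed.

Lemma orbit_returns (s : seq G) g : (forall x, A x -> x \in s) ->
  (forall k, (k <= size s)%N -> A (iter k phi g)) ->
  exists2 d, (0 < d <= size s)%N & iter d phi g = g.
Proof.
move=> As Aiter; have : ~~ uniq (traject phi g (size s).+1).
  apply/negP => uniq_orbit; suff : ((size s).+1 <= size s)%N by rewrite ltnn.
  have := uniq_leq_size uniq_orbit; rewrite size_traject; apply.
  by move=> y /trajectP [k ks ->]; apply: As; apply: Aiter.
case/(uniqPn g) => i [j [ij]]; rewrite size_traject => js.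
rewrite !nth_traject ?(ltn_trans ij) // => eij.
have iterK k d : (k + d <= size s)%N -> iter k phi g = iter (k + d) phi g -> g = iter d phi g.
  elim: k => [//|k IH] kds; rewrite addSn !iterS => e.
  apply: IH; first exact: ltnW.
  by apply: (phi_inj phi_iso) e; apply: Aiter; rewrite ?leq_addr; lia.
exists (j - i)%N; first by apply/andP; split; lia.
by symmetry; apply: (iterK i); rewrite subnKC ?(ltnW ij) //; lia.
Qed.

Lemma core_finite : finite_pred A -> exists r : nat, forall s : nat, (r <= s)%N ->
  forall g, H g <-> forall j : nat, (j <= s)%N -> fwd_defined A phi j g.
Proof.
case=> s0 As0; exists (size s0).+1 => s rs g; split=> [Hg j _|def_g].
  exact: ((core_iter_defined g).1 Hg (Posz j)).
have Aiter k : (k <= size s0)%N -> A (iter k phi g).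
  by move=> ks; apply: ((fwd_definedE s g).1 (def_g s (leqnn s))); lia.
have [d /andP [d_gt0 ds] gd] := orbit_returns As0 Aiter.
by apply: (periodic_in_core d_gt0) gd => k kd; apply: Aiter; lia.
Qed.

Section CoreInHNN.
Variables (Gs : groupType) (iota : G -> Gs) (t : Gs).
Hypothesis HNN : is_HNN_extension A phi iota t.

Lemma HNN_conj_stepP g g' (i : int) :
  (zpow t i)^-1 * iota g * zpow t i = (zpow t (i + 1%R)%R)^-1 * iota g' * zpow t (i + 1%R)%R
  <-> A g' /\ g = phi g'.
Proof.
rewrite conj_zpowS; split=> [/mulIg/mulgI e_iota | [Ag' ->]].
  exact: (iota_conj_in phi_iso HNN).
by case: HNN => _ ->.
Qed.

Lemma core_HNN_conj x : (exists2 h, H h & x = iota h) <->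
  forall i : int, exists g, x = (zpow t i)^-1 * iota g * zpow t i.
Proof.
split=> [[h Hh ->] | conj_x].
  suff conj_core i : exists2 g, H g & iota h = (zpow t i)^-1 * iota g * zpow t i.
    by move=> i; have [g _ ->] := conj_core i; exists g.
  elim/int_rect: i => [|n [g Hg ->] | n [g Hg ->]].
  - by exists h; rewrite //= invg1 mul1g mulg1.
  - have [a Ha <-] := core_preimage Hg; exists a => //.
    by rewrite -addn1 PoszD; apply/HNN_conj_stepP; split=> //; apply: core_A.
  - exists (phi g); first exact: core_phi.
    have -> : (- n%:Z = - n.+1%:Z + 1%R)%R by lia.
    by apply/esym/HNN_conj_stepP; split=> //; apply: core_A.
pose K g := exists i : int, x = (zpow t i)^-1 * iota g * zpow t i.
have pred_step g i : x = (zpow t i)^-1 * iota g * zpow t i -> A g /\ K (phi g).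
  move=> xi; have [g' xi'] := conj_x (i - 1%R)%R; rewrite -[i](GRing.subrK 1%R) in xi.
  have [Ag <-] := (HNN_conj_stepP g' g _).1 (etrans (esym xi') xi).
  by split=> //; exists (i - 1%R)%R.
have succ_step g i :
    x = (zpow t i)^-1 * iota g * zpow t i -> exists2 g', K g' & g = phi g'.
  move=> xi; have [g' xi'] := conj_x (i + 1%R)%R.
  have [_ ->] := (HNN_conj_stepP g g' i).1 (etrans (esym xi) xi').
  by exists g'; first exists (i + 1%R)%R.
have [g0 x0] := conj_x 0%R.
exists g0; last by rewrite x0 /= invg1 mul1g mulg1.
apply: (invariant_sub_core (K := K)); last by exists 0%R.
  by move=> g [i /pred_step []].
move=> g; split=> [[a [i /pred_step [_ Kphi]] ->] // | [i /succ_step [g' Kg' ->]]].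
by exists g'.
Qed.

End CoreInHNN.

End Core.

Theorem lemma2p1 (G : groupType) (A B : G -> Prop) (phi : G -> G)
    (Hiso : partial_iso A B phi)
    (Gs : groupType) (iota : G -> Gs) (t : Gs)
    (HNN : is_HNN_extension A phi iota t) :
  let H := core A B phi in
  [/\ (* H is the largest subgroup of G with phi(H) = H *)
      (is_subgroup H /\ subset_of H A /\ set_eq (image_of phi H) H /\
       forall K : G -> Prop, is_subgroup K -> subset_of K A ->
         set_eq (image_of phi K) K -> subset_of K H),
      (* in G*, H = intersection over i in Z of t^-i G t^i *)
      (forall x : Gs, (exists2 h, H h & x = iota h) <->
         forall i : int, exists g : G, x = (zpow t i)^-1 * iota g * zpow t i),
      (* H = { g : phi^j(g) defined for all j in Z } *)
      (forall g, H g <-> forall j : int, iter_defined A B phi j g) &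
      (* A finite => stabilisation *)
      (finite_pred A -> exists r : nat, forall s : nat, (r <= s)%N ->
         forall g, H g <-> forall j : nat, (j <= s)%N -> fwd_defined A phi j g)].
Proof.
split.
- split; first exact: core_subgroup.
  split; first by move=> g; apply: core_A.
  split; first exact: image_core.
  by move=> K _; apply: invariant_sub_core.
- exact: core_HNN_conj.
- exact: core_iter_defined.
- exact: core_finite.
Qed.
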